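(* Let $\Lambda=(V,\pi,v,\le)$ be a bi-colored weighted ordered vertex with $r(\Lambda)=2$, identify $V=\{1,\dots,l\}$ via $\le$, and suppose $V_\bullet=\{a,b\}$ with $b-a\ge3$. Then $$\sum_{(E,s,t)\in\mathcal{E}(\Lambda)}(-1)^{|E_{\bullet\to\circ}|}\prod_{e\in E}v(s(e))v(t(e))=0.$$
   Context: A bi-colored weighted ordered vertex is $\Lambda=(V,\pi,v,\le)$ with $V$ a finite set, $\pi\colon V\to\{\bullet,\circ\}$, $v\colon V\to\mathbb{Z}_{\ge1}$, $\le$ a total order on $V$; $V_\bullet=\pi^{-1}(\bullet)$, $r(\Lambda)=\sum_{i\in V_\bullet}v(i)$. $\mathcal{E}(\Lambda)$ is the set of data $(E,s,t)$ with $E$ a finite set and $s,t\colon E\to V$, such that the quiver $(V,E,s,t)$ has connected and simply connected geometric realization, $\pi s(e)\ne\pi t(e)$ and $s(e)<t(e)$ for all $e\in E$. $E_{\bullet\to\circ}=\{e\in E:\pi s(e)=\bullet\}$. *)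

From mathcomp Require Import all_boot all_order all_algebra.
From mathcomp Require Import boolp.
Set Implicit Arguments. Unset Strict Implicit. Unset Printing Implicit Defensive.

(* A bi-colored weighted ordered vertex with l vertices is encoded by
   V = 'I_l (the total order <= of V is the order of 'I_l),
   pi : 'I_l -> bool  with  pi i = true  iff  i is black (bullet),
   v  : 'I_l -> nat   with  v i >= 1.
   A datum (E,s,t) of E(Lambda) is (up to isomorphism over V) an edge set
   F : {set 'I_l * 'I_l}, an edge e being the pair (s e, t e). *)

Definition qadj (l : nat) (F : {set 'I_l * 'I_l}) : rel 'I_l :=
  fun x y => ((x, y) \in F) || ((y, x) \in F).

Definition qconnected (l : nat) (F : {set 'I_l * 'I_l}) : Prop :=
  forall x y : 'I_l, connect (qadj F) x y.

(* geometric realization has no cycle (simply connected): no closed walk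
   through >= 3 pairwise distinct vertices (loops and multiple edges cannot
   occur since edges are distinct pairs (s,t) with s < t). *)
Definition qacyclic (l : nat) (F : {set 'I_l * 'I_l}) : Prop :=
  forall c : seq 'I_l, uniq c -> 2 < size c -> ~~ cycle (qadj F) c.

Definition inE_Lambda (l : nat) (pi : 'I_l -> bool) (F : {set 'I_l * 'I_l}) : Prop :=
  [/\ qconnected F, qacyclic F &
      forall e, e \in F -> pi e.1 != pi e.2 /\ (e.1 < e.2)%N].

Definition rLambda (l : nat) (pi : 'I_l -> bool) (v : 'I_l -> nat) : nat :=
  \sum_(i : 'I_l | pi i) v i.

Definition E_sum (l : nat) (pi : 'I_l -> bool) (v : 'I_l -> nat) : int :=
  (\sum_(F : {set 'I_l * 'I_l} | `[< inE_Lambda pi F >])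
     (-1) ^+ #|[set e in F | pi e.1]| *
     (\prod_(e in F) (v e.1 * v e.2)%N)%:Z)%R.

From mathcomp Require Import all_boot all_order all_algebra.
From mathcomp Require Import boolp zify.
Set Implicit Arguments. Unset Strict Implicit.
Import GRing.Theory Num.Theory.

(* The two black vertices have weight 1, and every white vertex x with
   a < x < b can only be joined to a, by the edge (a,x), or to b, by the edge
   (x,b); in a tree it has at least one of them.  The white vertices a+1 and
   a+2 cannot both carry both edges, since a, a+1, b, a+2 would form a cycle.
   So the first of them that does not carry both edges is a leaf, and moving it
   from a to b or back is a sign-reversing involution on E(Lambda): the weight
   v(x) of the moved edge is unchanged but its source changes colour. *)

Lemma sum_sign_reversing_involution (R : numDomainType) (T : finType)
    (P : pred T) (f : T -> R) (g : T -> T) :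
  involutive g -> (forall t, P t -> P (g t)) ->
  (forall t, P t -> f (g t) = - f t)%R ->
  (\sum_(t | P t) f t = 0)%R.
Proof.
move=> gK Pg fg.
have Pg_eq t : P (g t) = P t by apply/idP/idP => [/Pg|/Pg //]; rewrite gK.
have : (\sum_(t | P t) f t = - \sum_(t | P t) f t)%R.
  rewrite {1}(reindex_inj (can_inj gK)) /= -sumrN.
  by apply: eq_big => t; rewrite ?Pg_eq // => /fg.
move/eqP; rewrite -subr_eq0 opprK -mulr2n mulrn_eq0 /=.
by move/eqP.
Qed.

Section LeafSwap.

Variables (T : finType) (e e' : rel T) (x p q : T).
Hypotheses (symE : symmetric e) (symE' : symmetric e').
Hypotheses (leafE : forall z, e x z = (z == p)) (leafE' : forall z, e' x z = (z == q)).
Hypothesis qx : q != x.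
Hypothesis agree : forall u w, u != x -> w != x -> e' u w = e u w.

Lemma leaf_notin_path y s :
  path e y s -> uniq (y :: s) -> y != x -> last y s != x -> x \notin y :: s.
Proof.
move=> pth uq yx lx; rewrite inE eq_sym (negbTE yx) /=; apply/negP => xs.
move: pth uq lx; case/splitPr: xs => s1 s2.
rewrite cat_path last_cat /= => /and3P [_ e1 pth2].
case: s2 pth2 => [|z s2] /=; first by rewrite eqxx.
move=> /andP [ez _] uq _; rewrite leafE in ez; rewrite symE leafE in e1.
have : uniq ((y :: s1) ++ x :: z :: s2) by [].
rewrite cat_uniq (eqP ez) -(eqP e1) => /and3P [_ /hasPn/(_ (last y s1)) + _].
by rewrite mem_last !inE eqxx orbT => /(_ isT).
Qed.

Lemma connect_avoid_leaf y z : y != x -> z != x -> connect e y z -> connect e' y z.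
Proof.
move=> yx zx /connectP [s pth zE]; subst z.
case/shortenP: pth zx => s' pth' uq' _ lx.
have xNs' := leaf_notin_path pth' uq' yx lx.
apply/connectP; exists s' => //.
apply: (@sub_in_path _ (fun w => w != x)) pth'; first by move=> u w ux wx; rewrite agree.
by apply/allP => w ws'; apply: contraNneq xNs' => <-.
Qed.

Lemma connected_leaf_swap :
  (forall u w, connect e u w) -> forall u w, connect e' u w.
Proof.
move=> conE.
have avoid u w : u != x -> w != x -> connect e' u w.
  by move=> ux wx; apply: connect_avoid_leaf.
have xq : connect e' x q by apply: connect1; rewrite leafE'.
have qx' : connect e' q x by apply: connect1; rewrite symE' leafE'.
move=> u w; have [->|ux] := eqVneq u x; have [->|wx] := eqVneq w x => //.
- exact: connect_trans xq (avoid _ _ qx wx).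
- exact: connect_trans (avoid _ _ ux qx) qx'.
- exact: avoid.
Qed.

Lemma acyclic_leaf_swap :
  (forall c, uniq c -> 2 < size c -> ~~ cycle e c) ->
  forall c, uniq c -> 2 < size c -> ~~ cycle e' c.
Proof.
move=> acE c uc sc; apply/negP => cc.
have [xc|xNc] := boolP (x \in c); last first.
  have : cycle e c.
    apply: (@sub_in_cycle _ (fun w => w != x) e') cc; first by move=> u w ux wx; rewrite -agree.
    by apply/allP => w wc; apply: contraNneq xNc => <-.
  by apply/negP; apply: acE.
(* Rotated to start at x, the cycle enters and leaves x through its only neighbour q. *)
case: (rot_to xc) => i s cE.
have : cycle e' (x :: s) by rewrite -cE rot_cycle.
have : uniq (x :: s) by rewrite -cE rot_uniq.
have : 2 < size (x :: s) by rewrite -cE size_rot.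
case: s {cE} => [|y [|z r]] //= _.
rewrite rcons_path /= => /and3P [_ yNr _] /and3P [exy _ elx].
rewrite leafE' in exy; rewrite symE' leafE' in elx; case/andP: elx => _ elx.
by move: yNr; rewrite (eqP exy) -(eqP elx) inE; move: (mem_last z r); rewrite inE => ->.
Qed.

End LeafSwap.

Definition symdiff (T : finType) (A B : {set T}) : {set T} := (A :\: B) :|: (B :\: A).

Lemma in_symdiff (T : finType) (A B : {set T}) (t : T) :
  (t \in symdiff A B) = ((t \in A) != (t \in B)).
Proof. by rewrite /symdiff !inE; case: (t \in A); case: (t \in B). Qed.

Lemma symdiffK (T : finType) (B : {set T}) : involutive (fun A => symdiff A B).
Proof.
by move=> A; apply/setP => t; rewrite !in_symdiff; case: (t \in A); case: (t \in B).
Qed.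

Lemma symdiff_pair (T : finType) (A : {set T}) z z' :
  z \in A -> z' \notin A -> symdiff A [set z; z'] = z' |: (A :\ z).
Proof.
move=> zA z'A; have zz' : z != z' by apply: contraNneq z'A => <-.
apply/setP => t; rewrite in_symdiff !inE.
have [->|tz] := eqVneq t z; first by rewrite zA eq_sym (negbTE zz').
have [->|tz'] := eqVneq t z'; first by rewrite (negbTE z'A).
by case: (t \in A).
Qed.

Lemma signed_prod (T : finType) (P : pred T) (A : {set T}) (g : T -> nat) :
  ((-1) ^+ #|[set t in A | P t]| * (\prod_(t in A) g t)%:Z =
   \prod_(t in A) ((if P t then -1 else 1) * (g t)%:Z))%R.
Proof.
rewrite big_split /= -big_mkcondr (big_morph Posz PoszM (erefl (1 : int))).
by congr (_ * _)%R; rewrite -prodr_const; apply: eq_bigl => t; rewrite !inE.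
Qed.

Lemma prod_setU1_setD1 (R : comPzRingType) (T : finType) (A : {set T}) z z' (h : T -> R) :
  z \in A -> z' \notin A -> h z' = (- h z)%R ->
  (\prod_(t in z' |: (A :\ z)) h t = - \prod_(t in A) h t)%R.
Proof.
move=> zA z'A hz; have z'Az : z' \notin A :\ z by rewrite !inE (negbTE z'A) andbF.
by rewrite big_setU1 //= (big_setD1 z zA) hz mulNr.
Qed.

Definition edge_weight (l : nat) (pi : 'I_l -> bool) (v : 'I_l -> nat) (e : 'I_l * 'I_l) : int :=
  ((if pi e.1 then -1 else 1) * (v e.1 * v e.2)%N%:Z)%R.

Lemma E_sum_edge_weight (l : nat) (pi : 'I_l -> bool) (v : 'I_l -> nat) :
  E_sum pi v = (\sum_(F | `[< inE_Lambda pi F >]) \prod_(e in F) edge_weight pi v e)%R.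
Proof. by apply: eq_bigr => F _; rewrite signed_prod. Qed.

Lemma ord_ltn_neq (l : nat) (u w : 'I_l) : u < w -> u != w.
Proof. by apply: contraTneq => ->; rewrite ltnn. Qed.

Lemma qadjC (l : nat) (F : {set 'I_l * 'I_l}) : symmetric (qadj F).
Proof. by move=> u w; rewrite /qadj orbC. Qed.

Section LeafBetweenBlacks.

Variables (l : nat) (pi : 'I_l -> bool) (a b : 'I_l).
Hypothesis black : forall i, pi i = (i == a) || (i == b).

Definition bicolored_increasing (F : {set 'I_l * 'I_l}) : Prop :=
  forall e, e \in F -> pi e.1 != pi e.2 /\ e.1 < e.2.

Definition leaf_edges (x : 'I_l) : {set 'I_l * 'I_l} := [set (a, x); (x, b)].

Definition one_edge (x : 'I_l) (F : {set 'I_l * 'I_l}) : bool :=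
  ((a, x) \in F) != ((x, b) \in F).

Variable x : 'I_l.
Hypotheses (ax : a < x) (xb : x < b).

Lemma white_between : pi x = false.
Proof. by rewrite black eq_sym (negbTE (ord_ltn_neq ax)) (negbTE (ord_ltn_neq xb)). Qed.

Lemma qadj_between F : bicolored_increasing F ->
  qadj F x =1 fun y => ((a, x) \in F) && (y == a) || ((x, b) \in F) && (y == b).
Proof.
move=> incF y; apply/idP/idP; last first.
  by rewrite /qadj; case/orP => /andP [xyF /eqP ->]; rewrite xyF ?orbT.
have piy : (x, y) \in F \/ (y, x) \in F -> pi y.
  by case=> /incF [/=]; rewrite white_between; case: (pi y).
rewrite /qadj; case/orP => yF; have /= [_ lt] := incF _ yF.
- have := piy (or_introl yF); rewrite black => /orP [/eqP ya|/eqP yb].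
    by move: (ltn_trans ax lt); rewrite ya ltnn.
  by rewrite -yb yF eqxx orbT.
- have := piy (or_intror yF); rewrite black => /orP [/eqP ya|/eqP yb].
    by rewrite -ya yF eqxx.
  by move: (ltn_trans lt xb); rewrite yb ltnn.
Qed.

Lemma qadj_one_edge F : bicolored_increasing F -> one_edge x F ->
  qadj F x =1 pred1 (if (a, x) \in F then a else b).
Proof.
move=> incF; rewrite /one_edge => oneF y; rewrite qadj_between //=.
by move: oneF; case: ((a, x) \in F); case: ((x, b) \in F) => /=; rewrite ?orbF.
Qed.

Lemma one_edge_symdiff F : one_edge x (symdiff F (leaf_edges x)) = one_edge x F.
Proof.
rewrite /one_edge !in_symdiff !inE !xpair_eqE !eqxx orbT.
by case: ((a, x) \in F); case: ((x, b) \in F) => /=.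
Qed.

Lemma symdiff_leaf_edges_valid F : inE_Lambda pi F -> one_edge x F ->
  inE_Lambda pi (symdiff F (leaf_edges x)).
Proof.
move=> [conF acF incF] oneF; set F' := symdiff F (leaf_edges x).
have incF' : bicolored_increasing F'.
  move=> e; rewrite in_symdiff negb_eqb !inE.
  case eF: (e \in F) => /=; first by move=> _; apply: incF.
  by case/orP => /eqP -> /=; rewrite white_between black eqxx ?orbT.
have oneF' : one_edge x F' by rewrite one_edge_symdiff.
have agree u w : u != x -> w != x -> qadj F' u w = qadj F u w.
  move=> ux wx; rewrite /qadj !in_symdiff !negb_eqb !inE !xpair_eqE.
  by rewrite (negbTE ux) (negbTE wx) !andbF /= !addbF.
have q'x : (if (a, x) \in F' then a else b) != x.
  by case: ifP => _; [rewrite ord_ltn_neq | rewrite eq_sym ord_ltn_neq].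
split => //.
- exact: (connected_leaf_swap (@qadjC _ F) (@qadjC _ F')
            (qadj_one_edge incF oneF) (qadj_one_edge incF' oneF') q'x agree).
- exact: (acyclic_leaf_swap (@qadjC _ F') (qadj_one_edge incF' oneF') agree).
Qed.

Variable v : 'I_l -> nat.
Hypotheses (va : v a = 1%N) (vb : v b = 1%N).

Lemma prod_symdiff_leaf_edges F : one_edge x F ->
  (\prod_(e in symdiff F (leaf_edges x)) edge_weight pi v e =
   - \prod_(e in F) edge_weight pi v e)%R.
Proof.
have w_ax : edge_weight pi v (a, x) = (- (v x)%:Z)%R.
  by rewrite /edge_weight /= black eqxx va mul1n mulN1r.
have w_xb : edge_weight pi v (x, b) = ((v x)%:Z)%R.
  by rewrite /edge_weight /= white_between vb muln1 mul1r.
rewrite /one_edge /leaf_edges; case axF: ((a, x) \in F); case xbF: ((x, b) \in F) => //= _.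
- rewrite symdiff_pair ?xbF //; apply: prod_setU1_setD1; rewrite ?xbF //.
  by rewrite w_ax w_xb opprK.
- rewrite setUC symdiff_pair ?axF //; apply: prod_setU1_setD1; rewrite ?axF //.
  by rewrite w_ax w_xb.
Qed.

End LeafBetweenBlacks.

Section PivotFlip.

Variables (l : nat) (a b c1 c2 : 'I_l).
Hypotheses (ac1 : a < c1) (c1c2 : c1 < c2) (c2b : c2 < b).

Definition pivot (F : {set 'I_l * 'I_l}) : 'I_l :=
  if ((a, c1) \in F) && ((c1, b) \in F) then c2 else c1.

Definition flip (F : {set 'I_l * 'I_l}) : {set 'I_l * 'I_l} :=
  if one_edge a b (pivot F) F then symdiff F (leaf_edges a b (pivot F)) else F.

Lemma pivot_between F : a < pivot F < b.
Proof.
by rewrite /pivot; case: ifP => _; rewrite ?c2b ?ac1 ?(ltn_trans ac1 c1c2) ?(ltn_trans c1c2 c2b).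
Qed.

Lemma flipK : involutive flip.
Proof.
move=> F; rewrite {2}/flip; case oneF: (one_edge a b (pivot F) F); last by rewrite /flip oneF.
have [ax xb] := andP (pivot_between F).
suff pivotF' : pivot (symdiff F (leaf_edges a b (pivot F))) = pivot F.
  by rewrite /flip pivotF' one_edge_symdiff // oneF symdiffK.
have c1Nc2 := ord_ltn_neq c1c2; have c1Na : c1 != a by rewrite eq_sym ord_ltn_neq.
move: oneF; rewrite /pivot /one_edge; case: ifP => [c1F _|_].
  have aNc2 := ord_ltn_neq (ltn_trans ac1 c1c2).
  rewrite !in_symdiff !negb_eqb !inE !xpair_eqE (negbTE c1Nc2) (negbTE c1Na).
  by rewrite (negbTE aNc2) !andbF /= !addbF c1F.
rewrite !in_symdiff !negb_eqb !inE !xpair_eqE !eqxx /= orbT !addbT.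
by case: ((a, c1) \in F); case: ((c1, b) \in F).
Qed.

Variable pi : 'I_l -> bool.
Hypothesis black : forall i, pi i = (i == a) || (i == b).

Lemma one_edge_pivot F : inE_Lambda pi F -> one_edge a b (pivot F) F.
Proof.
move=> [conF acF incF].
have ac2 := ltn_trans ac1 c1c2; have c1b := ltn_trans c1c2 c2b.
have some_edge (y : 'I_l) : a < y -> y < b -> ((a, y) \in F) || ((y, b) \in F).
  move=> ay yb; have /connectP [s pth aE] := conF y a.
  case: s pth aE => [_ ya|z s /= /andP [yz _] _]; first by move: ay; rewrite ya ltnn.
  move: yz; rewrite (qadj_between black ay yb incF).
  by case/orP => /andP [-> _]; rewrite ?orbT.
have cyc : ~~ [&& (a, c1) \in F, (c1, b) \in F, (a, c2) \in F & (c2, b) \in F].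
  have uniq_c : uniq [:: a; c1; b; c2].
    have ab := ltn_trans ac1 c1b.
    by rewrite /= !inE !negb_or [b == c2]eq_sym !ord_ltn_neq.
  apply: contraNN (acF _ uniq_c isT) => /and4P [e1 e2 e3 e4].
  by rewrite /= /qadj e1 e2 e3 e4 ?orbT.
rewrite /pivot /one_edge; case: ifP => [/andP [e1 e2]|c1F].
  move: cyc (some_edge _ ac2 c2b); rewrite e1 e2 /=.
  by case: ((a, c2) \in F); case: ((c2, b) \in F).
move: c1F (some_edge _ ac1 c1b).
by case: ((a, c1) \in F); case: ((c1, b) \in F).
Qed.

Lemma flip_valid F : inE_Lambda pi F -> inE_Lambda pi (flip F).
Proof.
move=> V; have [ax xb] := andP (pivot_between F).
have oneF := one_edge_pivot V.
by rewrite /flip oneF; apply: (symdiff_leaf_edges_valid black ax xb).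
Qed.

Variable v : 'I_l -> nat.
Hypotheses (va : v a = 1%N) (vb : v b = 1%N).

Lemma prod_flip F : inE_Lambda pi F ->
  (\prod_(e in flip F) edge_weight pi v e = - \prod_(e in F) edge_weight pi v e)%R.
Proof.
move=> V; have [ax xb] := andP (pivot_between F).
have oneF := one_edge_pivot V.
by rewrite /flip oneF; apply: (prod_symdiff_leaf_edges black ax xb va vb).
Qed.

End PivotFlip.

Theorem lemma4p13 (l : nat) (pi : 'I_l -> bool) (v : 'I_l -> nat)
  (a b : 'I_l)
  (hv : forall i, (0 < v i)%N)
  (hr : rLambda pi v = 2%N)
  (hblack : [set i | pi i] = [set a; b])
  (hab : (3 <= b - a)%N) :
  E_sum pi v = 0%R.
Proof.
have black i : pi i = (i == a) || (i == b).
  by have := congr1 (fun S : {set 'I_l} => i \in S) hblack; rewrite /= !inE.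
have aNb : a != b by apply: ord_ltn_neq; lia.
have [va vb] : v a = 1%N /\ v b = 1%N.
  move: hr; rewrite /rLambda (bigD1 a) ?black ?eqxx //= (bigD1 b) /=; last first.
    by rewrite black eqxx orbT eq_sym aNb.
  by have := hv a; have := hv b; lia.
have c1_lt : (a.+1 < l)%N by have := ltn_ord b; lia.
have c2_lt : (a.+2 < l)%N by have := ltn_ord b; lia.
have ac1 : a < Ordinal c1_lt by [].
have c1c2 : Ordinal c1_lt < Ordinal c2_lt by [].
have c2b : Ordinal c2_lt < b by rewrite /=; lia.
rewrite E_sum_edge_weight.
apply: (sum_sign_reversing_involution (flipK ac1 c1c2 c2b)) => F /asboolP V.
  by apply/asboolP; apply: flip_valid.
exact: prod_flip.
Qed.
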